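(* Let $\mathbf d=(d_1,d_2)\in\mathbb{N}^2\setminus\{(0,0)\}$ and let $Q_{\mathbf d}$ be the set of quads of bi-degree exactly $\mathbf d$. Then $Q_{\mathbf d}$ is finite and nonempty and its elements have pairwise distinct sizes. Listing its elements in order of decreasing size, the sizes form a sequence of consecutive integers, and the points of $\mathbb{Z}[\gamma]$ they represent form a strictly decreasing sequence of positive real numbers. The element of largest size has size $d_1+d_2$ and represents $d_1+d_2\gamma^{-1}$; the element of smallest size represents $|d_1-d_2\gamma^{-1}|$. Every element of $Q_{\mathbf d}$ other than these two represents a point $m+n\gamma^{-1}$ ($m,n\in\mathbb{Z}$) with $|m|\le d_1$ and $|n|\le d_2-1$.
   Context: Let $f\colon\mathbb{Z}\to\mathbb{Z}$ be defined by $f(0)=f(1)=1$, $f(i+2)=f(i+1)+f(i)$ for all $i\in\mathbb{Z}$; $\gamma=(1+\sqrt5)/2$; $\mathbb{Z}[\gamma]=\mathbb{Z}\oplus\mathbb{Z}\gamma^{-1}$. A quad is a tuple $q=(i;a,b,c)$ of non-negative integers with $a\ge1$. It represents $\alpha\in\mathbb{Z}[\gamma]$ if $\alpha=a\gamma^{-i}+b\gamma^{-i-1}+c\gamma^{-i-2}$. Its bi-degree is $(d_1(q),d_2(q))$ with $d_1(q)=af(i-2)+bf(i-1)+cf(i)$ and $d_2(q)=af(i-1)+bf(i)+cf(i+1)$, and its size is $a+b+c$. *)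

From HB Require Import structures.
From mathcomp Require Import all_boot all_order all_algebra.
Set Implicit Arguments. Unset Strict Implicit. Unset Printing Implicit Defensive.
Import Order.TTheory GRing.Theory Num.Theory.
Local Open Scope ring_scope.

Fixpoint fib (n : nat) : nat :=
  match n with
  | 0 => 0
  | 1 => 1
  | (m.+1 as k).+1 => fib k + fib m
  end%N.

(* f : Z -> Z with f(0) = f(1) = 1 and f(i+2) = f(i+1) + f(i) for all i in Z.
   f(i) = Fib(i+1), extended to negative indices via
   Fib(-n) = (-1)^(n+1) Fib(n). *)
Definition f (i : int) : int :=
  match i with
  | Posz n => (fib n.+1)%:Z
  | Negz n => (-1) ^+ n.+1 * (fib n)%:Z
  end.

Definition quad := (nat * nat * nat * nat)%type.
Definition qi (q : quad) : nat := q.1.1.1.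
Definition qa (q : quad) : nat := q.1.1.2.
Definition qb (q : quad) : nat := q.1.2.
Definition qc (q : quad) : nat := q.2.
Definition is_quad (q : quad) : bool := (1 <= qa q)%N.

Definition deg1 (q : quad) : int :=
  (qa q)%:Z * f ((qi q)%:Z - 2) + (qb q)%:Z * f ((qi q)%:Z - 1)
  + (qc q)%:Z * f (qi q)%:Z.
Definition deg2 (q : quad) : int :=
  (qa q)%:Z * f ((qi q)%:Z - 1) + (qb q)%:Z * f (qi q)%:Z
  + (qc q)%:Z * f ((qi q)%:Z + 1).

Definition qsize (q : quad) : nat := (qa q + qb q + qc q)%N.

Definition gamma {R : rcfType} : R := (1 + Num.sqrt 5) / 2.

Definition qval {R : rcfType} (q : quad) : R :=
  (qa q)%:R * gamma ^- (qi q) + (qb q)%:R * gamma ^- (qi q).+1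
  + (qc q)%:R * gamma ^- (qi q).+2.

Lemma f_0 : f 0 = 1. Proof. by []. Qed.
Lemma f_1 : f 1 = 1. Proof. by []. Qed.
Lemma f_m1 : f (-1) = 0. Proof. by []. Qed.
Lemma f_m2 : f (-2) = 1. Proof. by []. Qed.
Lemma f_m3 : f (-3) = -1. Proof. by []. Qed.

From HB Require Import structures.
From mathcomp Require Import all_boot all_order all_algebra.
From mathcomp Require Import zify ring lra.
Import Order.TTheory GRing.Theory Num.Theory.

Set Implicit Arguments.
Unset Strict Implicit.
Unset Printing Implicit Defensive.

(* Bi-degrees only involve f at indices >= -2, so they are natural numbers
   (deg1n, deg2n) expressed with shifted Fibonacci numbers fibs.  The map step
   rewrites gamma^-i as gamma^-(i+1) + gamma^-(i+2) and so turns a quad with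
   b <> 0 into a quad of the same bi-degree, of size one less, representing a
   point smaller by 2 gamma^-(i+1) (step_spec, qval_step).  Conversely every
   quad other than start d1 d2 has a step-predecessor (step_onto), and sizes
   are bounded by d1 + d2.  Hence Q_d is exactly the step-orbit of start d1 d2
   up to its first quad with b = 0 (section Orbit).  The represented points are
   located through (-1)^j gamma^-j = fibs j - fibs (j+1) gamma^-1, which gives
   their integer coordinates and bounds them by the bi-degree (section
   GoldenRatio); the main theorem collects these facts. *)

(* Shifted Fibonacci numbers: fibs j = f (j - 2), i.e. fibs 0 = 1, fibs 1 = 0
   and fibs j.+2 = Fib (j + 1). *)
Definition fibs (j : nat) : nat :=
  match j with 0 => 1 | 1 => 0 | k.+2 => fib k.+1 end.

Lemma fibsS j : fibs j.+2 = fibs j.+1 + fibs j.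
Proof. by case: j => [|[|j]] //; rewrite addnC. Qed.

Lemma fibs_gt0 j : 0 < fibs j.+2.
Proof. by elim: j => // j IH; apply: ltn_addr. Qed.

Arguments fibs : simpl never.

Definition deg1n (q : quad) : nat :=
  qa q * fibs (qi q) + qb q * fibs (qi q).+1 + qc q * fibs (qi q).+2.
Definition deg2n (q : quad) : nat :=
  qa q * fibs (qi q).+1 + qb q * fibs (qi q).+2 + qc q * fibs (qi q).+3.

Section DegreeTranslation.
Local Open Scope ring_scope.

Lemma f_fibs j : f (j%:Z - 2) = (fibs j)%:Z.
Proof. by case: j => [|[|j]] //; have -> : j.+2%:Z - 2 = j%:Z by lia. Qed.

Lemma f_fibs_shifts i :
  [/\ f (i%:Z - 1) = (fibs i.+1)%:Z, f i%:Z = (fibs i.+2)%:Z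
    & f (i%:Z + 1) = (fibs i.+3)%:Z].
Proof. by rewrite -!f_fibs; split; congr f; lia. Qed.

Lemma deg1E q : deg1 q = (deg1n q)%:Z.
Proof.
have [e1 e2 _] := f_fibs_shifts (qi q).
by rewrite /deg1 f_fibs e1 e2 /deg1n !PoszD !PoszM.
Qed.

Lemma deg2E q : deg2 q = (deg2n q)%:Z.
Proof.
have [e1 e2 e3] := f_fibs_shifts (qi q).
by rewrite /deg2 e1 e2 e3 /deg2n !PoszD !PoszM.
Qed.

End DegreeTranslation.

Lemma qsize_gt0 q : is_quad q -> 0 < qsize q.
Proof. by rewrite /is_quad /qsize; lia. Qed.

(* The size never exceeds d1 + d2: indeed d1 + d2 = a fibs (i+2) + b fibs (i+3)
   + c fibs (i+4), and these Fibonacci numbers are positive. *)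
Lemma qsize_le_deg q : qsize q <= deg1n q + deg2n q.
Proof.
case: q => [[[i a] b] c]; rewrite /qsize /qa /qb /qc /=.
have -> : deg1n (i, a, b, c) + deg2n (i, a, b, c) =
           a * fibs i.+2 + b * fibs i.+3 + c * fibs i.+4.
  by rewrite /deg1n /deg2n /qi /qa /qb /qc /= !fibsS; lia.
by rewrite !leq_add // leq_pmulr // fibs_gt0.
Qed.

(* The reduction step: using gamma^-i = gamma^-(i+1) + gamma^-(i+2) it lowers
   the size by one while keeping the bi-degree; it applies whenever b <> 0. *)
Definition step (q : quad) : quad :=
  let: (i, a, b, c) := q in
  if 2 <= a then (i, a.-1, b.-1, c.+1)
  else if 2 <= b then (i.+1, b.-1, c.+1, 0)
  else (i.+2, c.+1, 0, 0).

Lemma step_spec q : is_quad q -> qb q != 0 ->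
  [/\ is_quad (step q), deg1n (step q) = deg1n q, deg2n (step q) = deg2n q
    & (qsize (step q)).+1 = qsize q].
Proof.
case: q => [[[i a] b] c]; rewrite /is_quad /qb /qa /=.
case: a => [|[|a]] // _; case: b => [|[|b]] // _;
  by rewrite /step /deg1n /deg2n /qsize /qi /qa /qb /qc /= !fibsS; split=> //; lia.
Qed.

(* The quad of largest size in Q_d: it represents d1 + d2 gamma^-1. *)
Definition start (d1 d2 : nat) : quad :=
  if d1 == 0 then (1, d2, 0, 0) else (0, d1, d2, 0).

Lemma start_spec d1 d2 : (d1, d2) != (0, 0) ->
  [/\ is_quad (start d1 d2), deg1n (start d1 d2) = d1,
      deg2n (start d1 d2) = d2 & qsize (start d1 d2) = d1 + d2].
Proof.
rewrite /start /is_quad /deg1n /deg2n /qsize /qi /qa /qb /qc /fibs.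
by case: d1 => [|d1] /=; [case: d2|]; split=> //; lia.
Qed.

Lemma step_onto q : is_quad q ->
  q = start (deg1n q) (deg2n q) \/ exists2 p, is_quad p && (qb p != 0) & step p = q.
Proof.
case: q => [[[i a] b] c]; rewrite /is_quad /qa /=; case: a => // a _.
case: c => [|c]; last by right; exists (i, a.+2, b.+1, c).
case: b => [|b]; case: i => [|[|i]];
  rewrite /start /deg1n /deg2n /qi /qa /qb /qc /fibs /= ?muln0 ?muln1 ?addn0 //;
  try by left.
- by right; exists (i, 1, 1, a).
- by right; exists (0, 1, a.+2, b).
- by right; exists (i.+1, 1, a.+2, b).
Qed.

Section Orbit.
Variables d1 d2 : nat.
Hypothesis d_neq0 : (d1, d2) != (0, 0).
Local Notation orbit k := (iter k step (start d1 d2)).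

Lemma orbit_inv k : (forall j, j < k -> qb (orbit j) != 0) ->
  [/\ is_quad (orbit k), deg1n (orbit k) = d1, deg2n (orbit k) = d2
    & qsize (orbit k) + k = d1 + d2].
Proof.
elim: k => [|k IH] hb; first by case: (start_spec d_neq0) => *; rewrite addn0.
have [hq e1 e2 e3] := IH (fun j hj => hb j (ltnW hj)).
have [s1 s2 s3 s4] := step_spec hq (hb k (ltnSn k)).
by rewrite iterS s2 s3 addnS -addSn s4.
Qed.

(* Since sizes are positive, b = 0 is reached within d1 + d2 steps. *)
Lemma orbit_stops : exists k, qb (orbit k) == 0.
Proof.
have [/hasP [k _ hk] | /hasPn hb] :=
  boolP (has (fun k => qb (orbit k) == 0) (iota 0 (d1 + d2))); first by exists k.
have hb' j : j < d1 + d2 -> qb (orbit j) != 0 by move=> hj; apply: hb; rewrite mem_iota.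
have [hq _ _ hs] := orbit_inv hb'.
by move: (qsize_gt0 hq) hs; lia.
Qed.

(* The index of the last element of Q_d. *)
Definition orbit_len : nat := ex_minn orbit_stops.

Lemma orbit_len_spec :
  qb (orbit orbit_len) = 0 /\ forall j, j < orbit_len -> qb (orbit j) != 0.
Proof.
rewrite /orbit_len; case: ex_minnP => m /eqP hm hmin; split=> // j hj.
by apply/negP => /hmin; rewrite leqNgt hj.
Qed.

Lemma orbit_in_Qd k : k <= orbit_len ->
  [/\ is_quad (orbit k), deg1n (orbit k) = d1, deg2n (orbit k) = d2
    & qsize (orbit k) + k = d1 + d2].
Proof.
by move=> hk; apply: orbit_inv => j hj; apply: orbit_len_spec.2 (leq_trans hj hk).
Qed.

(* Conversely every quad of bi-degree d lies on the orbit: walk backwards with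
   step_onto; the walk ends at the start quad because sizes are bounded by
   d1 + d2. *)
Lemma orbit_complete q : is_quad q -> deg1n q = d1 -> deg2n q = d2 ->
  exists2 k, k <= orbit_len & orbit k = q.
Proof.
move=> hq h1 h2; move: {2}(d1 + d2 - qsize q) (erefl (d1 + d2 - qsize q)) => n.
elim: n q hq h1 h2 => [|n IH] q hq h1 h2 hn.
all: have [hs | [p /andP [hp hpb] hpq]] := step_onto hq;
  first by exists 0; rewrite //= hs h1 h2.
all: have [_ e1 e2 e3] := step_spec hp hpb; rewrite -hpq e1 e2 in h1 h2.
- (* the predecessor p would be larger than d1 + d2 *)
  by move: hn (qsize_le_deg p); rewrite -hpq -e3 h1 h2; lia.
- have hnp : d1 + d2 - qsize p = n by move: hn; rewrite -hpq -e3; lia.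
  have [k hk hkp] := IH p hp h1 h2 hnp.
  have hk_lt : k < orbit_len.
    rewrite ltn_neqAle hk andbT; apply: contraNneq hpb => ek.
    by rewrite -hkp ek orbit_len_spec.1.
  by exists k.+1; rewrite // iterS hkp.
Qed.

Definition orbit_seq : seq quad := mkseq (fun k => orbit k) orbit_len.+1.

Lemma mem_orbit_seq q :
  q \in orbit_seq <-> is_quad q /\ ((deg1 q, deg2 q) = (d1%:Z, d2%:Z))%R.
Proof.
rewrite deg1E deg2E; split.
- case/mapP => k; rewrite mem_iota ltnS => hk ->.
  by have [hq -> -> _] := orbit_in_Qd hk.
- case=> hq [h1 h2]; have [k hk <-] := orbit_complete hq h1 h2.
  by apply/mapP; exists k; rewrite // mem_iota ltnS.
Qed.

Lemma orbit_seq_head x0 : head x0 orbit_seq = start d1 d2.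
Proof. by []. Qed.

Lemma orbit_seq_link x0 k : k.+1 < size orbit_seq ->
  [/\ is_quad (nth x0 orbit_seq k), qb (nth x0 orbit_seq k) != 0
    & nth x0 orbit_seq k.+1 = step (nth x0 orbit_seq k)].
Proof.
rewrite size_mkseq ltnS => hk; rewrite !nth_mkseq ?ltnS ?(ltnW hk) //.
by have [hq _ _ _] := orbit_in_Qd (ltnW hk); split=> //; apply: orbit_len_spec.2.
Qed.

Lemma orbit_seq_last x0 : let q := last x0 orbit_seq in
  [/\ is_quad q, qb q = 0, deg1n q = d1 & deg2n q = d2].
Proof.
rewrite -nth_last size_mkseq nth_mkseq //=.
by have [hq h1 h2 _] := orbit_in_Qd (leqnn _); split=> //; apply: orbit_len_spec.1.
Qed.

(* An inner element has i > 0 or c > 0: a quad (0; a, b, 0) has bi-degree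
   (a, b), hence size d1 + d2, which only the first element has. *)
Lemma orbit_seq_inner x0 k : 0 < k < (size orbit_seq).-1 ->
  let q := nth x0 orbit_seq k in
  [/\ is_quad q, qb q != 0, (0 < qi q) || (0 < qc q), deg1n q = d1 & deg2n q = d2].
Proof.
rewrite size_mkseq /= => /andP [hk0 hk]; rewrite nth_mkseq ?ltnS ?(ltnW hk) //.
have [hq h1 h2 hs] := orbit_in_Qd (ltnW hk); split=> //; first exact: orbit_len_spec.2.
move: hq h1 h2 hs; case: (orbit k) => [[[i a] b] c].
rewrite /deg1n /deg2n /qsize /qi /qa /qb /qc /=.
by case: i => [|i] //; case: c => [|c] //; rewrite /fibs /=; lia.
Qed.

End Orbit.

Local Open Scope ring_scope.

Section GoldenRatio.
Variable R : rcfType.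
Local Notation rho := ((gamma : R)^-1).

Lemma gamma_gt0 : 0 < gamma :> R.
Proof. by rewrite /gamma divr_gt0 ?ltr0n // ltr_wpDr ?sqrtr_ge0. Qed.

Lemma gamma_sqr : gamma ^+ 2 = gamma + 1 :> R.
Proof.
have s5 : Num.sqrt 5 ^+ 2 = 5 :> R by rewrite sqr_sqrtr ?ler0n.
rewrite /gamma; have -> : ((1 + Num.sqrt 5) / 2) ^+ 2 =
          (6 + 2 * Num.sqrt 5 + (Num.sqrt 5 ^+ 2 - 5)) / 4 :> R by field.
by rewrite s5 subrr addr0; field.
Qed.

Lemma rho_gt0 : 0 < rho.
Proof. by rewrite invr_gt0 gamma_gt0. Qed.

Lemma rho_rec j : rho ^+ j = rho ^+ j.+1 + rho ^+ j.+2.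
Proof.
have rho_sqr : rho + rho ^+ 2 = 1.
  have gamma_neq0 : gamma != 0 :> R by rewrite gt_eqF ?gamma_gt0.
  by rewrite -(expr1n _ 2) -(mulVf gamma_neq0) exprMn gamma_sqr; field.
by rewrite -[LHS]mulr1 -rho_sqr !exprS; ring.
Qed.

(* Proved jointly for j and j + 1 by the recurrence rho_rec. *)
Lemma signed_rho_expr j : (-1) ^+ j * rho ^+ j = (fibs j)%:R - (fibs j.+1)%:R * rho.
Proof.
suff [] : (-1) ^+ j * rho ^+ j = (fibs j)%:R - (fibs j.+1)%:R * rho /\
          (-1) ^+ j.+1 * rho ^+ j.+1 = (fibs j.+1)%:R - (fibs j.+2)%:R * rho by [].
elim: j => [|j [IH1 IH2]].
  by rewrite /fibs /= !expr0 !expr1 !mul1r mulN1r mul0r subr0 sub0r.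
split=> //.
have -> : rho ^+ j.+2 = rho ^+ j - rho ^+ j.+1 by rewrite (rho_rec j) addrAC subrr add0r.
have -> : (-1) ^+ j.+2 * (rho ^+ j - rho ^+ j.+1) =
          (-1) ^+ j * rho ^+ j + (-1) ^+ j.+1 * rho ^+ j.+1 :> R by rewrite !exprS; ring.
by rewrite IH1 IH2 [fibs j.+3]fibsS (fibsS j) !natrD; ring.
Qed.

(* The coordinates (m, n) of the point m + n gamma^-1 represented by a quad:
   by signed_rho_expr, (-1)^i (m, -n) = (u - v, u' - v') where
   (u + v, u' + v') is the bi-degree and v, v' collect the b-terms. *)
Definition coord1 (q : quad) : int :=
  (-1) ^+ qi q * ((qa q * fibs (qi q) + qc q * fibs (qi q).+2)%N%:Z
                  - (qb q * fibs (qi q).+1)%N%:Z).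
Definition coord2 (q : quad) : int :=
  - (-1) ^+ qi q * ((qa q * fibs (qi q).+1 + qc q * fibs (qi q).+3)%N%:Z
                    - (qb q * fibs (qi q).+2)%N%:Z).

Lemma coord1_bound q : `|coord1 q| <= (deg1n q)%:Z.
Proof. by rewrite /coord1 normrMsign /deg1n; lia. Qed.

(* The second coordinate is strictly smaller than d2 as soon as both the
   b-term and the (a, c)-terms contribute to d2. *)
Lemma coord2_bound q : is_quad q -> qb q != 0%N -> (0 < qi q)%N || (0 < qc q)%N ->
  `|coord2 q| <= (deg2n q)%:Z - 1.
Proof.
case: q => [[[i a] b] c]; rewrite /is_quad /coord2 /deg2n /qi /qa /qb /qc /= => ha hb hic.
have hu : (0 < a * fibs i.+1 + c * fibs i.+3)%N.
  case/orP: hic => [|hc]; last by rewrite ltn_addl // muln_gt0 hc fibs_gt0.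
  by case: i => // i _; rewrite ltn_addr // muln_gt0 ha fibs_gt0.
have hv : (0 < b * fibs i.+2)%N by rewrite muln_gt0 lt0n hb fibs_gt0.
by rewrite mulNr normrN normrMsign; lia.
Qed.

Lemma qval_coord q : qval q = (coord1 q)%:~R + (coord2 q)%:~R * rho.
Proof.
case: q => [[[i a] b] c]; rewrite /qval /coord1 /coord2 /qi /qa /qb /qc /= -!exprVn.
rewrite -[rho ^+ i](signrMK i) -[rho ^+ i.+1](signrMK i.+1).
rewrite -[rho ^+ i.+2](signrMK i.+2) !signed_rho_expr !exprS.
by rewrite !(intrM, intrB, intrN, intr_sign) -!pmulrn; ring.
Qed.

Lemma qval_gt0 q : is_quad q -> 0 < qval q :> R.
Proof.
case: q => [[[i a] b] c]; rewrite /is_quad /qval /qi /qa /qb /qc /= -!exprVn => ha.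
have hrho := rho_gt0.
have hA : 0 < a%:R * rho ^+ i by rewrite mulr_gt0 ?ltr0n ?exprn_gt0.
have hB : 0 <= b%:R * rho ^+ i.+1 by rewrite mulr_ge0 ?ler0n ?exprn_ge0 ?ltW.
have hC : 0 <= c%:R * rho ^+ i.+2 by rewrite mulr_ge0 ?ler0n ?exprn_ge0 ?ltW.
lra.
Qed.

(* A reduction step trades gamma^-i + gamma^-(i+1) for gamma^-(i+2): the
   represented point drops by exactly 2 gamma^-(i+1). *)
Lemma qval_step q : is_quad q -> qb q != 0%N ->
  qval q = qval (step q) + 2 * rho ^+ (qi q).+1.
Proof.
case: q => [[[i a] b] c]; rewrite /is_quad /qb /qa /=.
case: a => [|[|a]] // _; case: b => [|[|b]] // _;
  by rewrite /step /qval /qi /qa /qb /qc /= -!exprVn (rho_rec i); ring.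
Qed.

Lemma qval_step_lt q : is_quad q -> qb q != 0%N -> qval (step q) < qval q :> R.
Proof.
by move=> hq hb; rewrite [X in _ < X]qval_step // ltrDl mulr_gt0 ?exprn_gt0 ?rho_gt0.
Qed.

Lemma qval_start d1 d2 : qval (start d1 d2) = d1%:R + d2%:R * rho.
Proof.
rewrite /start /qval /qi /qa /qb /qc -!exprVn.
by case: (d1 =P 0%N) => [->|_] /=; ring.
Qed.

Lemma qval_b0 q : is_quad q -> qb q = 0%N ->
  qval q = `|(deg1n q)%:R - (deg2n q)%:R * rho|.
Proof.
move=> hq hb.
have E : qval q = (-1) ^+ qi q * ((deg1n q)%:R - (deg2n q)%:R * rho).
  rewrite qval_coord /coord1 /coord2 /deg1n /deg2n hb.
  by rewrite !(intrM, intrB, intrN, intr_sign) -!pmulrn !natrD !natrM; ring.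
by rewrite -[LHS]gtr0_norm ?qval_gt0 // E normrMsign.
Qed.

Lemma qval_inner q : is_quad q -> qb q != 0%N -> (0 < qi q)%N || (0 < qc q)%N ->
  exists m n : int, qval q = m%:~R + n%:~R * rho /\
    `|m| <= (deg1n q)%:Z /\ `|n| <= (deg2n q)%:Z - 1.
Proof.
move=> hq hb hic; exists (coord1 q), (coord2 q).
by rewrite -qval_coord coord1_bound coord2_bound.
Qed.

End GoldenRatio.

Theorem mainTheorem18 (R : rcfType) (d1 d2 : nat) :
  (d1, d2) != (0%N, 0%N) ->
  exists s : seq quad,
    [/\ (* s enumerates exactly Q_d (hence Q_d is finite) *)
        (forall q : quad, q \in s <-> (is_quad q /\ (deg1 q, deg2 q) = (d1%:Z, d2%:Z))),
        (* Q_d is nonempty *)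
        s != [::],
        (* listed by decreasing size, sizes are consecutive integers
           (in particular pairwise distinct) *)
        (forall k : nat, (k.+1 < size s)%N ->
          (qsize (nth (0,0,0,0)%N s k.+1)).+1 = qsize (nth (0,0,0,0)%N s k)) /\
        (* the represented points are positive and strictly decreasing *)
        (forall q, q \in s -> 0 < qval (R := R) q) /\
        (forall k : nat, (k.+1 < size s)%N ->
          qval (R := R) (nth (0,0,0,0)%N s k.+1) < qval (nth (0,0,0,0)%N s k)),
        (* the element of largest size *)
        qsize (head (0,0,0,0)%N s) = (d1 + d2)%N /\
        qval (R := R) (head (0,0,0,0)%N s) = d1%:R + d2%:R * gamma^-1 /\
        (* the element of smallest size *)
        qval (R := R) (last (0,0,0,0)%N s) = `|d1%:R - d2%:R * gamma^-1|
      & (* all other elements *)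
        forall k : nat, (0 < k < (size s).-1)%N ->
          exists m n : int,
            qval (R := R) (nth (0,0,0,0)%N s k) = m%:~R + n%:~R * gamma^-1 /\
            `|m| <= d1%:Z /\ `|n| <= d2%:Z - 1].
Proof.
move=> hd; exists (orbit_seq hd); split.
- exact: mem_orbit_seq.
- by rewrite -size_eq0 size_mkseq.
- split; last split.
  + move=> k /(orbit_seq_link (0, 0, 0, 0)%N) [hq hb ->].
    by case: (step_spec hq hb).
  + by move=> q /mem_orbit_seq [hq _]; apply: qval_gt0.
  + move=> k /(orbit_seq_link (0, 0, 0, 0)%N) [hq hb ->].
    exact: qval_step_lt.
- have [_ _ _ hs] := start_spec hd.
  have [hq hb h1 h2] := orbit_seq_last hd (0, 0, 0, 0)%N.
  by rewrite !orbit_seq_head hs qval_start qval_b0 // h1 h2.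
- move=> k /(orbit_seq_inner (0, 0, 0, 0)%N) [hq hb hic h1 h2].
  by have := qval_inner R hq hb hic; rewrite h1 h2.
Qed.
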